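(* Let $\zeta_5=\exp(2\pi i/5)$, $K=\mathbb{Q}(\zeta_5)\subset\mathbb{C}$, $\mathcal{O}_K=\mathbb{Z}[\zeta_5]$, let $\sigma:K\to\mathbb{C}$ be the embedding with $\sigma(\zeta_5)=\zeta_5^2$, and let $\mathcal{S}=\{z\in\mathcal{O}_K : |\sigma(z)|\le 1\}$. Then for every $z\in\mathcal{S}$, $$\min_{z'\in\mathcal{S}\setminus\{z\}}|z-z'|\le 1.$$
   Context: Elements of $K$ are regarded as complex numbers via the inclusion $K\subset\mathbb{C}$. *)

From HB Require Import structures.
From mathcomp Require Import all_boot all_order all_algebra.
From mathcomp Require Import complex.
From mathcomp Require Import all_classical all_reals all_analysis.
Set Implicit Arguments. Unset Strict Implicit. Unset Printing Implicit Defensive.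
Import Order.TTheory GRing.Theory Num.Theory.
Local Open Scope ring_scope.
Local Open Scope complex_scope.

Definition zeta5 (R : realType) : R[i] :=
  (cos (2 * pi / 5)) +i* (sin (2 * pi / 5)).

Definition OKelt (R : realType) (a : 'I_4 -> int) : R[i] :=
  \sum_(k < 4) (a k)%:~R * zeta5 R ^+ k.

Definition sigmaOK (R : realType) (a : 'I_4 -> int) : R[i] :=
  \sum_(k < 4) (a k)%:~R * (zeta5 R ^+ 2) ^+ k.

Definition inS (R : realType) (z : R[i]) : Prop :=
  exists a : 'I_4 -> int, z = OKelt R a /\ `|sigmaOK R a| <= 1.

From HB Require Import structures.
From mathcomp Require Import all_boot all_order all_algebra.
From mathcomp Require Import complex.
From mathcomp Require Import all_classical all_reals all_analysis.
From mathcomp Require Import ring lra.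
Set Implicit Arguments.
Unset Strict Implicit.
Unset Printing Implicit Defensive.
Import Order.TTheory GRing.Theory Num.Theory.
Local Open Scope ring_scope.
Local Open Scope complex_scope.

(* The conjugates w_k = sigma(zeta_5)^k (k < 5) are unit vectors with
   sum_k w_k^2 = 0, so they form a tight frame of the plane:
   sum_k <s, w_k>^2 = (5/2) |s|^2 for every s.  If s = sigma(z) lies in the
   unit disc while s + w_k and s - w_k both lie outside it, then
   4 <s, w_k>^2 < |s|^4 for every k; summing gives 10 |s|^2 < 5 |s|^4, which is
   impossible for |s| <= 1.  Hence some z +- zeta_5^k is again in S, and it
   lies at distance 1 from z. *)

Section TightFrame.
Variables (R : realType) (I : finType).

Lemma tight_frame_step (a b : I -> R) (x y : R) :
  (0 < #|I|)%N ->
  (forall k, a k ^+ 2 + b k ^+ 2 = 1) ->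
  \sum_k (a k ^+ 2 - b k ^+ 2) = 0 -> \sum_k a k * b k = 0 ->
  x ^+ 2 + y ^+ 2 <= 1 ->
  exists k, ((x + a k) ^+ 2 + (y + b k) ^+ 2 <= 1)
            || ((x - a k) ^+ 2 + (y - b k) ^+ 2 <= 1).
Proof.
move=> I_gt0 unit_ab sum_diff sum_prod r_le1.
have [/existsP[k step] | /existsPn far] := boolP [exists k,
  ((x + a k) ^+ 2 + (y + b k) ^+ 2 <= 1)
  || ((x - a k) ^+ 2 + (y - b k) ^+ 2 <= 1)]; first by exists k.
set r := x ^+ 2 + y ^+ 2 in r_le1 *.
have r_ge0 : 0 <= r by rewrite addr_ge0 ?sqr_ge0.
set d := fun k => x * a k + y * b k.
have frame : (\sum_k d k ^+ 2) * 2 = r * #|I|%:R.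
  transitivity (\sum_k (r * (a k ^+ 2 + b k ^+ 2)
     + (x ^+ 2 - y ^+ 2) * (a k ^+ 2 - b k ^+ 2) + 4 * x * y * (a k * b k))).
    by rewrite mulr_suml; apply: eq_bigr => k _; rewrite /d /r; ring.
  rewrite !big_split /= -!mulr_sumr sum_diff sum_prod !mulr0 !addr0.
  under eq_bigr do rewrite unit_ab.
  by rewrite sumr_const mulr_natr.
have d_small k : 4 * d k ^+ 2 < r ^+ 2.
  move: (far k) (unit_ab k); rewrite negb_or -!ltNge => /andP[far_p far_m] unit_k.
  have pos_p : 0 < r + 2 * d k by rewrite /r /d; lra.
  have pos_m : 0 < r - 2 * d k by rewrite /r /d; lra.
  by have := mulr_gt0 pos_p pos_m; nra.
have sum_small : \sum_k 4 * d k ^+ 2 < \sum_(k : I) r ^+ 2.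
  by apply: ltr_sum => [|k _]; [rewrite has_predT /index_enum unlock -enumT -cardT|].
rewrite -mulr_sumr sumr_const -[r ^+ 2 *+ _]mulr_natr in sum_small.
have r2_le : r ^+ 2 <= r * 2 by nra.
have : r ^+ 2 * #|I|%:R <= r * #|I|%:R * 2.
  by rewrite [r * _ * 2]mulrAC -subr_ge0 -mulrBl mulr_ge0 ?subr_ge0.
lra.
Qed.

End TightFrame.

Section ComplexPlane.
Variable R : realType.
Implicit Types v w s : R[i].

Lemma normc_le1 v : (`|v| <= 1) = (complex.Re v ^+ 2 + complex.Im v ^+ 2 <= 1).
Proof. by rewrite -(@expr_le1 _ 2%N) // -add_Re2_Im2 lecR. Qed.

Lemma normc_eq1 v : `|v| = 1 -> complex.Re v ^+ 2 + complex.Im v ^+ 2 = 1.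
Proof. by move=> v1; apply: complexI; rewrite add_Re2_Im2 v1 expr1n. Qed.

Lemma Re_sqrc w : complex.Re (w ^+ 2) = complex.Re w ^+ 2 - complex.Im w ^+ 2.
Proof. by case: w => a b; rewrite !expr2. Qed.

Lemma Im_sqrc w : complex.Im (w ^+ 2) = (complex.Re w * complex.Im w) *+ 2.
Proof. by case: w => a b; rewrite expr2 /= mulr2n mulrC. Qed.

Lemma tight_frame_stepC (I : finType) (w : I -> R[i]) s :
  (0 < #|I|)%N -> (forall k, `|w k| = 1) -> \sum_k w k ^+ 2 = 0 -> `|s| <= 1 ->
  exists k (b : bool), `|s + (-1) ^+ b * w k| <= 1.
Proof.
move=> I_gt0 unit_w frame s_le1.
have /(congr1 (@complex.Re R)) := frame; have /(congr1 (@complex.Im R)) := frame.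
rewrite !raddf_sum /=.
rewrite (eq_bigr _ (fun k _ => Im_sqrc (w k))) (eq_bigr _ (fun k _ => Re_sqrc (w k))).
rewrite sumrMnl => /eqP; rewrite mulrn_eq0 /= => /eqP sum_ReIm sum_Re2Im2.
rewrite normc_le1 in s_le1.
have [k] := tight_frame_step I_gt0 (fun k => normc_eq1 (unit_w k)) sum_Re2Im2 sum_ReIm s_le1.
case/orP=> step; exists k; [exists false | exists true];
  by rewrite normc_le1 /= ?(mul1r, mulN1r) !raddfD ?raddfN.
Qed.

End ComplexPlane.

Section PrimitiveRoots.
Variable F : idomainType.
Implicit Types z : F.

Lemma prime_prim_root p z : prime p -> z ^+ p = 1 -> z != 1 -> p.-primitive_root z.
Proof.
move=> p_pr zp1 z_neq1; move/primeP: (p_pr) => [_ dvd_p].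
have [m prim_m /dvd_p/pred2P[m1|<- //]] := prim_order_exists (prime_gt0 p_pr) zp1.
by move: z_neq1; rewrite -[z]expr1 -m1 prim_expr_order ?eqxx.
Qed.

Lemma prim_root_sum n z : (1 < n)%N -> n.-primitive_root z -> \sum_(k < n) z ^+ k = 0.
Proof.
move=> n_gt1 prim_z.
have z_neq1 : z != 1 by rewrite -[z]expr1 -(prim_order_dvd prim_z) dvdn1 gtn_eqF.
have /esym/eqP := subrX1 z n; rewrite prim_expr_order // subrr mulf_eq0 subr_eq0.
by rewrite (negbTE z_neq1) => /eqP.
Qed.

End PrimitiveRoots.

Definition pow_coord (k : nat) (i : 'I_4) : int :=
  if k == 4 then -1 else ((i : nat) == k)%:Z.

Lemma pow_coordE (V : comNzRingType) (x : V) (k : nat) : (k < 5)%N ->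
  \sum_(i < 5) x ^+ i = 0 -> \sum_(i < 4) (pow_coord k i)%:~R * x ^+ i = x ^+ k.
Proof.
rewrite !big_ord_recr !big_ord0 /= /pow_coord => k_lt5 cyclo.
case: k k_lt5 => [|[|[|[|[|]]]]] //= _; rewrite ?mulr0 ?mul0r; try ring.
by transitivity (x ^+ 4 - (0 + x ^+ 0 + x ^+ 1 + x ^+ 2 + x ^+ 3 + x ^+ 4));
  [ring | rewrite cyclo subr0].
Qed.

Lemma sum_pow_coord_shift (V : comNzRingType) (x : V) (a : 'I_4 -> int) (e : int)
    (k : nat) : (k < 5)%N -> \sum_(i < 5) x ^+ i = 0 ->
  \sum_(i < 4) (a i + e * pow_coord k i)%:~R * x ^+ i
    = \sum_(i < 4) (a i)%:~R * x ^+ i + e%:~R * x ^+ k.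
Proof.
move=> k_lt5 cyclo; rewrite -(pow_coordE k_lt5 cyclo) mulr_sumr -big_split /=.
by apply: eq_bigr => i _; rewrite intrD intrM mulrDl mulrA.
Qed.

Section Zeta5.
Variable R : realType.

Lemma zeta5_expr n :
  zeta5 R ^+ n = cos (n%:R * (2 * pi / 5)) +i* sin (n%:R * (2 * pi / 5)).
Proof.
elim: n => [|n IH]; first by rewrite expr0 !mul0r cos0 sin0.
rewrite exprS IH /zeta5; set t := 2 * pi / 5.
rewrite -natr1 mulrDl mul1r cosD sinD.
by apply/eqP; rewrite eq_complex /=; apply/andP; split; apply/eqP; ring.
Qed.

Lemma zeta5_prim : 5.-primitive_root (zeta5 R).
Proof.
apply: prime_prim_root => //.
  by rewrite zeta5_expr (_ : 5%:R * _ = pi *+ 2) ?cos2pi ?sin2pi // mulr2n; lra.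
apply/negP => /eqP/(congr1 (@complex.Im R)) /=.
have : 0 < sin (2 * pi / 5 : R).
  by apply: sin_gt0_pi; have := pi_gt0 R; rewrite !ltr_pdivrMr //; lra.
by move=> + sin0; rewrite sin0 ltxx.
Qed.

Lemma zeta5_norm : `|zeta5 R| = 1.
Proof. by rewrite normc_def /= cos2Dsin2 sqrtr1. Qed.

End Zeta5.

Theorem mainTheorem4 (R : realType) (z : R[i]) :
  inS z -> exists z' : R[i], [/\ inS z', z' != z & `|z - z'| <= 1].
Proof.
move=> [a [-> Sa]]; set rho := zeta5 R ^+ 2.
have prim := zeta5_prim R.
have prim_rho : 5.-primitive_root rho by rewrite prim_root_exp_coprime.
have frame : \sum_(k < 5) (rho ^+ k) ^+ 2 = 0.
  rewrite -[RHS](@prim_root_sum _ 5 (rho ^+ 2)) ?prim_root_exp_coprime //.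
  by apply: eq_bigr => k _; rewrite exprAC.
have unit_rho k : `|rho ^+ k| = 1 by rewrite !normrX zeta5_norm !expr1n.
have card5 : (0 < #|'I_5|)%N by rewrite card_ord.
have [k [b in_disc]] := tight_frame_stepC card5 unit_rho frame Sa.
pose a' i := a i + (-1) ^+ b * pow_coord k i.
have shift (x : R[i]) : 5.-primitive_root x ->
    \sum_(i < 4) (a' i)%:~R * x ^+ i = \sum_(i < 4) (a i)%:~R * x ^+ i + (-1) ^+ b * x ^+ k.
  by move=> prim_x; rewrite /a' sum_pow_coord_shift ?intr_sign ?ltn_ord ?prim_root_sum.
have z'E : OKelt R a' = OKelt R a + (-1) ^+ b * zeta5 R ^+ k by rewrite /OKelt shift.
have sigmaE : sigmaOK R a' = sigmaOK R a + (-1) ^+ b * rho ^+ k by rewrite /sigmaOK shift.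
exists (OKelt R a'); split.
- by exists a'; rewrite sigmaE.
- rewrite z'E -subr_eq0 addrAC subrr add0r mulf_neq0 ?signr_eq0 //.
  by rewrite expf_neq0 // (prim_root_eq0 prim).
- by rewrite z'E opprD addrA subrr add0r normrN normrM normr_sign normrX zeta5_norm expr1n mulr1.
Qed.
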